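(* Let $u:[0,T]\times U\to[0,\infty)$ with each $u(t)$ continuous, and $t\in(0,T]$. The family of sets $\Gamma^+_{\eta,\sigma,r_0}(u,t)$ is monotone decreasing with respect to $\eta$ and $r_0$ and monotone increasing with respect to $\sigma$. Furthermore $$\Gamma^+(u,t)=\bigcup_{\eta>0}\bigcap_{\sigma>0}\bigcup_{r_0>0}\Gamma^+_{\eta,\sigma,r_0}(u,t),$$ and consequently, if $\mathcal{H}^{d-1}(\Gamma^+(u,t))>0$ then there is $\eta>0$ such that for every $\sigma>0$ there is $r_0(\sigma)>0$ with $\mathcal{H}^{d-1}(\Gamma^+_{\eta,\sigma,r_0}(u,t))>0$.
   Context: $U\subset\mathbb{R}^d$ open, $\mu_+>0$, $\Omega(t)=\{u(t)>0\}$. For $x_0\in\partial\Omega(t_0)$: $V_n(t_0,x_0)>0$ means there are $\eta,r_0>0$ with $\{x:|x-x_0|\le\eta(t_0-s)\}\subset\Omega(s)^\complement$ for all $t_0-r_0\le s<t_0$; for given $\eta,r_0>0$ one writes $V_n^{r_0}(t_0,x_0)\ge\eta$ if this holds with those specific $\eta,r_0$. $D_+u(t,x_0)=\{p: u(t,x)\le p\cdot(x-x_0)+o(|x-x_0|)\text{ for }x\in\overline{\Omega(t)}\}$, and for $\sigma,r_0>0$, $D_+^{\sigma,r_0}u(t,x_0)=\{p: u(t,x)\le p\cdot(x-x_0)+\sigma|x-x_0|\text{ for }x\in B_{r_0}(x_0)\cap\overline{\Omega(t)}\}$. Then $\Gamma^+(u,t)=\{x\in\partial\Omega(t): V_n(t,x)>0,\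 |p|^2<1+\mu_+\text{ for some }p\in D_+u(t,x)\}$ and $\Gamma^+_{\eta,\sigma,r_0}(u,t)=\{x\in\partial\Omega(t): V_n^{r_0}(t,x)\ge\eta\text{ and there is }p\in D_+^{\sigma,r_0}u(t,x)\text{ with }|p|^2-(1+\mu_+)<-\eta\}$. *)

From HB Require Import structures.
From mathcomp Require Import all_boot all_order all_algebra.
From mathcomp Require Import all_classical all_reals all_analysis.
Set Implicit Arguments. Unset Strict Implicit. Unset Printing Implicit Defensive.
Import Order.TTheory GRing.Theory Num.Theory.
Import numFieldNormedType.Exports.
Local Open Scope classical_set_scope.
Local Open Scope ring_scope.

(* Points of R^d are row vectors 'rV[R]_d.  Euclidean structure written out
   explicitly (the library norm on matrices is the max norm). *)
Definition dotv (R : realType) (d : nat) (p q : 'rV[R]_d) : R :=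
  \sum_(i < d) p ord0 i * q ord0 i.

Definition enorm (R : realType) (d : nat) (v : 'rV[R]_d) : R :=
  Num.sqrt (dotv v v).

Definition Omega (R : realType) (d : nat) (U : set 'rV[R]_d)
  (u : R -> 'rV[R]_d -> R) (t : R) : set 'rV[R]_d :=
  [set x | U x /\ 0 < u t x].

Definition bdry (R : realType) (d : nat) (A : set 'rV[R]_d) : set 'rV[R]_d :=
  closure A `\` interior A.

Definition Vn_ge (R : realType) (d : nat) (U : set 'rV[R]_d)
  (u : R -> 'rV[R]_d -> R) (t0 : R) (x0 : 'rV[R]_d) (eta r0 : R) : Prop :=
  forall s : R, 0 <= s -> t0 - r0 <= s -> s < t0 ->
    forall x : 'rV[R]_d, enorm (x - x0) <= eta * (t0 - s) ->
      ~ Omega U u s x.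

Definition Vn_pos (R : realType) (d : nat) (U : set 'rV[R]_d)
  (u : R -> 'rV[R]_d -> R) (t0 : R) (x0 : 'rV[R]_d) : Prop :=
  exists eta r0 : R, 0 < eta /\ 0 < r0 /\ Vn_ge U u t0 x0 eta r0.

Definition Dplus (R : realType) (d : nat) (U : set 'rV[R]_d)
  (u : R -> 'rV[R]_d -> R) (t : R) (x0 : 'rV[R]_d) : set 'rV[R]_d :=
  [set p | forall eps : R, 0 < eps -> exists delta : R, 0 < delta /\
     forall x, closure (Omega U u t) x -> enorm (x - x0) < delta ->
       u t x <= dotv p (x - x0) + eps * enorm (x - x0)].

Definition Dplus_sr (R : realType) (d : nat) (U : set 'rV[R]_d)
  (u : R -> 'rV[R]_d -> R) (t : R) (x0 : 'rV[R]_d) (sigma r0 : R)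
  : set 'rV[R]_d :=
  [set p | forall x, enorm (x - x0) < r0 -> closure (Omega U u t) x ->
       u t x <= dotv p (x - x0) + sigma * enorm (x - x0)].

Definition GammaPlus (R : realType) (d : nat) (U : set 'rV[R]_d)
  (mu : R) (u : R -> 'rV[R]_d -> R) (t : R) : set 'rV[R]_d :=
  [set x | bdry (Omega U u t) x /\ Vn_pos U u t x /\
     exists p, Dplus U u t x p /\ dotv p p < 1 + mu].

Definition GammaPlus_esr (R : realType) (d : nat) (U : set 'rV[R]_d)
  (mu : R) (u : R -> 'rV[R]_d -> R) (t eta sigma r0 : R) : set 'rV[R]_d :=
  [set x | bdry (Omega U u t) x /\ Vn_ge U u t x eta r0 /\
     exists p, Dplus_sr U u t x sigma r0 p /\ dotv p p - (1 + mu) < - eta].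

Definition ediam (R : realType) (d : nat) (C : set 'rV[R]_d) : \bar R :=
  ereal_sup [set (enorm (x - y))%:E | x in C & y in C].

Definition hcontrib (R : realType) (d : nat) (s : nat) (C : set 'rV[R]_d)
  : \bar R :=
  if pselect (C = set0) then 0%E else ((fine (ediam C)) ^+ s)%:E.

Definition hausdorff_delta (R : realType) (d : nat) (s : nat) (delta : R)
  (A : set 'rV[R]_d) : \bar R :=
  ereal_inf [set (\sum_(0 <= i <oo) hcontrib s (C i))%E |
     C in [set C : nat -> set 'rV[R]_d |
        A `<=` \bigcup_i C i /\ forall i, (ediam (C i) <= delta%:E)%E]].

(* s-dimensional Hausdorff (outer) measure
   H^s(A) = lim_{delta -> 0+} H^s_delta(A) = sup_{delta > 0} H^s_delta(A)
   (unnormalized convention, as in Falconer). *)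
Definition hausdorff (R : realType) (d : nat) (s : nat) (A : set 'rV[R]_d)
  : \bar R :=
  ereal_sup [set hausdorff_delta s delta A | delta in [set delta : R | 0 < delta]].

From HB Require Import structures.
From mathcomp Require Import all_boot all_order all_algebra.
From mathcomp Require Import all_classical all_reals all_analysis.
From mathcomp Require Import lra.
Set Implicit Arguments.
Unset Strict Implicit.
Unset Printing Implicit Defensive.
Import Order.TTheory GRing.Theory Num.Theory.
Import numFieldNormedType.Exports.
Local Open Scope classical_set_scope.
Local Open Scope ring_scope.

(* A point of
   Gamma^+ lies in Gamma^+_{eta,sigma,r0} for eta below both its normal-speed
   bound and (1 + mu - |p|^2) / 2, and r0 below the radius on which the o(|x - x0|)
   remainder of p is under sigma |x - x0|. Conversely, membership for every
   sigma = 1/(n+1) provides p_n on balls of radii r_n with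
   |p_n|^2 <= 1 + mu - eta; by compactness (p_n) has a cluster point p, and
   since replacing p_n by p changes the linear bound by at most
   d |p - p_n| |x - x0|, p is a superdifferential with |p|^2 < 1 + mu.
   For the Hausdorff measure argue by contraposition: choosing a bad sigma_n
   for each eta = 1/(n+1) covers Gamma^+ by the countably many
   H^{d-1}-null sets Gamma^+_{1/(n+1), sigma_n, 1/(m+1)}. *)

Section Euclid.
Variables (R : realType) (d : nat).
Implicit Types (p q v : 'rV[R]_d).

Lemma enorm_ge0 v : 0 <= enorm v.
Proof. exact: sqrtr_ge0. Qed.

Lemma dotv_ge0 v : 0 <= dotv v v.
Proof. by apply: sumr_ge0 => i _; rewrite -expr2 sqr_ge0. Qed.

Lemma sqr_coord_le_dotv v i : v ord0 i ^+ 2 <= dotv v v.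
Proof.
rewrite /dotv (bigD1 i) //= expr2 lerDl.
by apply: sumr_ge0 => j _; rewrite -expr2 sqr_ge0.
Qed.

Lemma norm_coord_le_enorm v i : `|v ord0 i| <= enorm v.
Proof. by rewrite -sqrtr_sqr ler_sqrt ?sqr_coord_le_dotv ?dotv_ge0. Qed.

Lemma dotvBl p q v : dotv (p - q) v = dotv p v - dotv q v.
Proof. by rewrite /dotv -sumrB; apply: eq_bigr => i _; rewrite !mxE mulrBl. Qed.

Lemma norm_dotv_le q v a b : (forall i, `|q ord0 i| <= a) ->
  (forall i, `|v ord0 i| <= b) -> `|dotv q v| <= d%:R * a * b.
Proof.
move=> qa vb; rewrite (le_trans (ler_norm_sum _ _ _)) //.
rewrite -mulrA mulr_natl -[X in _ *+ X]card_ord -sumr_const.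
by apply: ler_sum => i _; rewrite normrM ler_pM.
Qed.

Lemma continuous_dotv_self : continuous (fun v => dotv v v).
Proof.
have -> : (fun v => dotv v v) = \sum_(i < d) (fun v => v ord0 i * v ord0 i).
  by rewrite fct_sumE.
elim/big_ind: _.
- exact: cst_continuous.
- by move=> f g cf cg v; apply: continuousD; [exact: cf | exact: cg].
- by move=> i _ v; apply: continuousM; exact: coord_continuous.
Qed.

Lemma compact_dotv_le (c : R) : compact [set v : 'rV[R]_d | dotv v v <= c].
Proof.
pose I := `[- Num.sqrt c, Num.sqrt c]%classic.
apply: (@subclosed_compact _ _ [set v : 'rV[R]_d | forall i, I (v ord0 i)]).
- apply: (preimage_closed _ (@closed_le R c)) => v _.
  exact: continuous_dotv_self.
- by apply: (@rV_compact _ _ (fun=> I)) => _; exact: segment_compact.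
- move=> v /= vc i; rewrite /I set_itvE /= -ler_norml.
  apply: (le_trans (norm_coord_le_enorm v i)).
  by rewrite /enorm ler_sqrt // (le_trans (dotv_ge0 v)).
Qed.
End Euclid.

Section Superdifferential.
Variables (R : realType) (d : nat) (U : set 'rV[R]_d) (u : R -> 'rV[R]_d -> R).
Variables (t : R) (x0 : 'rV[R]_d).

Lemma Dplus_sr_sigma_monotone (sigma1 sigma2 r0 : R) : sigma1 <= sigma2 ->
  Dplus_sr U u t x0 sigma1 r0 `<=` Dplus_sr U u t x0 sigma2 r0.
Proof.
move=> le12 p hp x xr xO; apply: (le_trans (hp x xr xO)).
by rewrite lerD2l ler_wpM2r // enorm_ge0.
Qed.

Lemma Dplus_sr_r0_antitone (sigma r1 r2 : R) : r1 <= r2 ->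
  Dplus_sr U u t x0 sigma r2 `<=` Dplus_sr U u t x0 sigma r1.
Proof. by move=> le12 p hp x xr; apply: hp; exact: lt_le_trans le12. Qed.

Lemma DplusP (p : 'rV[R]_d) : Dplus U u t x0 p <->
  (forall eps, 0 < eps -> exists2 r0, 0 < r0 & Dplus_sr U u t x0 eps r0 p).
Proof.
split=> hp eps /hp.
- by move=> [r0 [r0_gt0 hr0]]; exists r0 => // x xr xO; exact: hr0.
- by move=> [r0 r0_gt0 hr0]; exists r0; split => // x xO xr; exact: hr0.
Qed.

Lemma Dplus_sr_perturb (p q : 'rV[R]_d) (sigma r0 tau : R) :
  (forall i, `|p ord0 i - q ord0 i| <= tau) ->
  Dplus_sr U u t x0 sigma r0 q -> Dplus_sr U u t x0 (sigma + d%:R * tau) r0 p.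
Proof.
move=> pq hq x xr xO.
have pq' i : `|(p - q) ord0 i| <= tau by rewrite !mxE.
have := norm_dotv_le pq' (norm_coord_le_enorm (x - x0)).
rewrite dotvBl ler_norml => /andP[+ _]; have := hq x xr xO; lra.
Qed.

Lemma Dplus_cluster (ps : nat -> 'rV[R]_d) (rs : nat -> R) (p : 'rV[R]_d) :
  (forall n, 0 < rs n) -> (forall n, Dplus_sr U u t x0 (n.+1%:R^-1) (rs n) (ps n)) ->
  cluster (ps @ \oo) p -> Dplus U u t x0 p.
Proof.
move=> rs_gt0 hps clp; apply/DplusP => eps eps_gt0.
have eps2_gt0 : 0 < eps / 2 by rewrite divr_gt0.
pose tau := eps / (2 * (d%:R + 1)).
have tau_gt0 : 0 < tau by rewrite divr_gt0 ?mulr_gt0 ?ltr_wpDl.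
have d_tau : d%:R * tau <= eps / 2.
  have d_ge0 : 0 <= d%:R :> R by [].
  have : tau * (2 * (d%:R + 1)) = eps by rewrite mulfVK // gt_eqF // ?mulr_gt0 ?ltr_wpDl.
  nra.
have ev_ps : (ps @ \oo) (ps @` [set n | n.+1%:R^-1 < eps / 2]).
  by apply: filterS (near_infty_natSinv_lt (PosNum eps2_gt0)) => n small; exists n.
have [_ [[n small_n <-] [_ near_n]]] := clp _ _ ev_ps (nbhsx_ballx p tau tau_gt0).
exists (rs n) => //.
apply: (Dplus_sr_sigma_monotone _ (Dplus_sr_perturb (tau := tau) _ (hps n))).
  by rewrite [leRHS]splitr lerD // ltW.
by move=> i; have := near_n ord0 i; rewrite /ball /= => /ltW.
Qed.
End Superdifferential.

Section GammaPlus.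
Variables (R : realType) (d : nat) (U : set 'rV[R]_d) (mu : R).
Variables (u : R -> 'rV[R]_d -> R) (t : R).

Lemma Vn_ge_eta_antitone (x : 'rV[R]_d) (eta1 eta2 r0 : R) : eta1 <= eta2 ->
  Vn_ge U u t x eta2 r0 -> Vn_ge U u t x eta1 r0.
Proof.
move=> le12 hV s s_ge0 s_ge s_lt y hy; apply: hV => //.
by apply: (le_trans hy); rewrite ler_wpM2r // subr_ge0 ltW.
Qed.

Lemma Vn_ge_r0_antitone (x : 'rV[R]_d) (eta r1 r2 : R) : r1 <= r2 ->
  Vn_ge U u t x eta r2 -> Vn_ge U u t x eta r1.
Proof. by move=> le12 hV s s_ge0 s_ge; apply: hV => //; lra. Qed.

Lemma GammaPlus_esr_eta_antitone (eta1 eta2 sigma r0 : R) : eta1 <= eta2 ->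
  GammaPlus_esr U mu u t eta2 sigma r0 `<=` GammaPlus_esr U mu u t eta1 sigma r0.
Proof.
move=> le12 x [bx [hV [p [hp hpp]]]]; split=> //; split.
  exact: Vn_ge_eta_antitone hV.
by exists p; split => //; lra.
Qed.

Lemma GammaPlus_esr_r0_antitone (eta sigma r1 r2 : R) : r1 <= r2 ->
  GammaPlus_esr U mu u t eta sigma r2 `<=` GammaPlus_esr U mu u t eta sigma r1.
Proof.
move=> le12 x [bx [hV [p [hp hpp]]]]; split=> //; split.
  exact: Vn_ge_r0_antitone hV.
by exists p; split => //; exact: Dplus_sr_r0_antitone hp.
Qed.

Lemma GammaPlus_esr_sigma_monotone (eta sigma1 sigma2 r0 : R) : sigma1 <= sigma2 ->
  GammaPlus_esr U mu u t eta sigma1 r0 `<=` GammaPlus_esr U mu u t eta sigma2 r0.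
Proof.
move=> le12 x [bx [hV [p [hp hpp]]]]; split=> //; split=> //.
by exists p; split => //; exact: Dplus_sr_sigma_monotone hp.
Qed.

Lemma GammaPlus_sub_esr :
  GammaPlus U mu u t `<=`
    \bigcup_(eta in [set e : R | 0 < e])
      \bigcap_(sigma in [set e : R | 0 < e])
        \bigcup_(r0 in [set e : R | 0 < e]) GammaPlus_esr U mu u t eta sigma r0.
Proof.
move=> x [bx [[eta0 [r00 [eta0_gt0 [r00_gt0 hV]]]] [p [/DplusP hp hpp]]]].
pose eta := Num.min eta0 ((1 + mu - dotv p p) / 2).
have eta_gt0 : 0 < eta by rewrite /eta lt_min eta0_gt0 divr_gt0 // subr_gt0.
have [eta_le0 eta_le] : eta <= eta0 /\ eta <= (1 + mu - dotv p p) / 2.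
  by apply/andP; rewrite -le_min.
exists eta => // sigma /= /hp [r r_gt0 hr].
exists (Num.min r r00); first by rewrite /= lt_min r_gt0.
split=> //; split.
  apply: Vn_ge_eta_antitone eta_le0 (Vn_ge_r0_antitone _ hV).
  by rewrite ge_min lexx orbT.
exists p; split; last lra.
by apply: Dplus_sr_r0_antitone hr; rewrite ge_min lexx.
Qed.

Lemma esr_sub_GammaPlus :
  \bigcup_(eta in [set e : R | 0 < e])
    \bigcap_(sigma in [set e : R | 0 < e])
      \bigcup_(r0 in [set e : R | 0 < e]) GammaPlus_esr U mu u t eta sigma r0
  `<=` GammaPlus U mu u t.
Proof.
move=> x [eta /= eta_gt0 hx].
have [r1 r1_gt0 [bx [hV _]]] := hx 1 ltr01.
have /choice[rp hrp] n : exists rp : R * 'rV[R]_d, 0 < rp.1 /\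
    Dplus_sr U u t x (n.+1%:R^-1) rp.1 rp.2 /\ dotv rp.2 rp.2 <= 1 + mu - eta.
  have n_gt0 : 0 < n.+1%:R^-1 :> R by rewrite invr_gt0.
  have [r r_gt0 [_ [_ [p [hp hpp]]]]] := hx _ n_gt0.
  by exists (r, p); split => //; split => //; lra.
have ev_le : ((fun n => (rp n).2) @ \oo) [set v | dotv v v <= 1 + mu - eta].
  by exists 0%N => // n _; have [_ []] := hrp n.
have [p [p_le clp]] := compact_dotv_le _ ev_le.
split=> //; split; first by exists eta, r1.
exists p; split; last by move: p_le => /=; lra.
by apply: (Dplus_cluster (rs := fun n => (rp n).1)) clp => n; have [? []] := hrp n.
Qed.

Lemma GammaPlusE :
  GammaPlus U mu u t =
    \bigcup_(eta in [set e : R | 0 < e])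
      \bigcap_(sigma in [set e : R | 0 < e])
        \bigcup_(r0 in [set e : R | 0 < e]) GammaPlus_esr U mu u t eta sigma r0.
Proof. by apply/seteqP; split; [exact: GammaPlus_sub_esr | exact: esr_sub_GammaPlus]. Qed.

Lemma GammaPlus_sub_bigcup_esr (sg : nat -> R) : (forall n, 0 < sg n) ->
  GammaPlus U mu u t `<=`
    \bigcup_n \bigcup_m GammaPlus_esr U mu u t (n.+1%:R^-1) (sg n) (m.+1%:R^-1).
Proof.
move=> sg_gt0 x /GammaPlus_sub_esr [eta /= eta_gt0 hx].
have [n] := ltr_add_invr eta_gt0; rewrite add0r => /ltW n_le.
have [r /= r_gt0 hr] := hx _ (sg_gt0 n).
have [m] := ltr_add_invr r_gt0; rewrite add0r => /ltW m_le.
exists n => //; exists m => //.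
by apply: (GammaPlus_esr_eta_antitone n_le); exact: (GammaPlus_esr_r0_antitone m_le).
Qed.
End GammaPlus.

Section Hausdorff.
Variables (R : realType) (d s : nat).
Implicit Types (A B : set 'rV[R]_d).
Local Open Scope ereal_scope.

Lemma nneseries_pickle_inv (f : nat -> nat -> \bar R) :
  (forall k j, 0 <= f k j) ->
  \sum_(0 <= n <oo) (if pickle_inv n is Some kj then f kj.1 kj.2 else 0) =
  \sum_(0 <= k <oo) \sum_(0 <= j <oo) f k j.
Proof.
move=> f_ge0.
pose g n := if @pickle_inv (nat * nat)%type n is Some kj then f kj.1 kj.2 else 0.
have g_ge0 n : 0 <= g n by rewrite /g; case: pickle_inv.
rewrite (nneseries_esumT g_ge0).
have -> : \esum_(n in [set: nat]) g n = \esum_(n in pickle @` [set: nat * nat]) g n.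
  rewrite [RHS]esum_mkcond; apply: eq_esum => n _; case: ifPn => // n_out.
  rewrite /g; case E: pickle_inv => [kj|] //; exfalso; move/negP: n_out; apply.
  by rewrite inE; exists kj => //; have := @pickle_invK (nat * nat)%type n; rewrite E.
rewrite esum_image; last by move=> a b _ _; exact: (pcan_inj (@pickleK (nat * nat)%type)).
under eq_esum => kj _ do rewrite /g pickleK_inv.
rewrite -(_ : [set: nat] `*`` (fun=> [set: nat]) = setT); last by apply/seteqP; split.
rewrite -(esum_esum (fun k j _ _ => f_ge0 k j)) -nneseries_esumT; last first.
  by move=> k; apply: esum_ge0 => j _; exact: f_ge0.
by apply: eq_eseriesr => k _; rewrite nneseries_esumT.
Qed.

Lemma ediam_set0 : ediam (set0 : set 'rV[R]_d) = -oo.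
Proof. by apply/eqP; rewrite eq_le leNye andbT; apply: ge_ereal_sup => _ [x []]. Qed.

Lemma hcontrib_set0 : hcontrib s (set0 : set 'rV[R]_d) = 0.
Proof. by rewrite /hcontrib; case: pselect. Qed.

Lemma hcontrib_ge0 A : 0 <= hcontrib s A.
Proof.
rewrite /hcontrib; case: pselect => // /eqP/set0P[x Ax] /=.
rewrite lee_fin exprn_ge0 // fine_ge0 //.
apply: le_trans (ereal_sup_ubound _); last by exists x => //; exists x.
by rewrite lee_fin enorm_ge0.
Qed.

Lemma le_hausdorff_delta delta A B : A `<=` B ->
  hausdorff_delta s delta A <= hausdorff_delta s delta B.
Proof.
move=> AB; apply: ereal_inf_le_tmp => _ [C [BC C_small] <-].
by exists C => //; split => //; exact: subset_trans BC.
Qed.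

Lemma hausdorff_delta_le delta A : (0 < delta)%R ->
  hausdorff_delta s delta A <= hausdorff s A.
Proof. by move=> delta_gt0; apply: ereal_sup_ubound; exists delta. Qed.

Lemma le_hausdorff A B : A `<=` B -> hausdorff s A <= hausdorff s B.
Proof.
move=> AB; apply: ge_ereal_sup => _ [delta delta_gt0 <-].
exact: le_trans (le_hausdorff_delta delta AB) (hausdorff_delta_le B delta_gt0).
Qed.

Lemma hausdorff_delta_bigcup_null delta (A : nat -> set 'rV[R]_d) :
  (forall k, hausdorff_delta s delta (A k) <= 0) ->
  hausdorff_delta s delta (\bigcup_k A k) <= 0.
Proof.
move=> A_null; apply/lee_addgt0Pr => eps eps_gt0; rewrite add0e.
have /choice[C hC] k : exists C : nat -> set 'rV[R]_d,
    (A k `<=` \bigcup_j C j /\ forall j, ediam (C j) <= delta%:E) /\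
    \sum_(0 <= j <oo) hcontrib s (C j) <= (eps / (2 ^ k.+1)%:R)%:E.
  have : hausdorff_delta s delta (A k) < (eps / (2 ^ k.+1)%:R)%:E.
    by apply: le_lt_trans (A_null k) _; rewrite lte_fin divr_gt0.
  by move=> /ereal_inf_lt[_ [Ck hCk <-] /ltW]; exists Ck.
pose D n := if @pickle_inv (nat * nat)%type n is Some kj then C kj.1 kj.2 else set0.
have hcontribD n : hcontrib s (D n) =
    if @pickle_inv (nat * nat)%type n is Some kj then hcontrib s (C kj.1 kj.2) else 0.
  by rewrite /D; case: pickle_inv => //; rewrite hcontrib_set0.
apply: ge_ereal_inf; exists (\sum_(0 <= n <oo) hcontrib s (D n)).
  exists D => //; split=> [x [k _ /(hC k).1.1[j _ Cx]]|n].
    by exists (pickle (k, j)) => //; rewrite /D pickleK_inv.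
  rewrite /D; case: pickle_inv => [[k j]|]; first exact: (hC k).1.2.
  by rewrite ediam_set0 leNye.
under eq_eseriesr => n _ do rewrite hcontribD.
rewrite (nneseries_pickle_inv (f := fun k j => hcontrib s (C k j))); last first.
  by move=> *; exact: hcontrib_ge0.
apply: le_trans (epsilon_trick0 xpredT (ltW eps_gt0)).
apply: lee_nneseries => [k _ _|k _]; last exact: (hC k).2.
by apply: nneseries_ge0 => j _ _; exact: hcontrib_ge0.
Qed.

Lemma hausdorff_bigcup_null (A : nat -> set 'rV[R]_d) :
  (forall k, hausdorff s (A k) <= 0) -> hausdorff s (\bigcup_k A k) <= 0.
Proof.
move=> A_null; apply: ge_ereal_sup => _ [delta delta_gt0 <-].
apply: hausdorff_delta_bigcup_null => k.
exact: le_trans (hausdorff_delta_le _ delta_gt0) (A_null k).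
Qed.
End Hausdorff.

Theorem lemma4p8 (R : realType) (d : nat) (U : set 'rV[R]_d) (mu T : R)
  (u : R -> 'rV[R]_d -> R) (t : R) :
  open U -> 0 < mu ->
  (forall s x, 0 <= s <= T -> U x -> 0 <= u s x) ->
  (forall s, 0 <= s <= T -> {within U, continuous (u s)}) ->
  0 < t <= T ->
  (* monotone decreasing in eta *)
  (forall eta1 eta2 sigma r0, 0 < eta1 -> eta1 <= eta2 -> 0 < sigma -> 0 < r0 ->
     GammaPlus_esr U mu u t eta2 sigma r0 `<=` GammaPlus_esr U mu u t eta1 sigma r0) /\
  (* monotone decreasing in r0 *)
  (forall eta sigma r1 r2, 0 < eta -> 0 < sigma -> 0 < r1 -> r1 <= r2 ->
     GammaPlus_esr U mu u t eta sigma r2 `<=` GammaPlus_esr U mu u t eta sigma r1) /\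
  (* monotone increasing in sigma *)
  (forall eta sigma1 sigma2 r0, 0 < eta -> 0 < sigma1 -> sigma1 <= sigma2 -> 0 < r0 ->
     GammaPlus_esr U mu u t eta sigma1 r0 `<=` GammaPlus_esr U mu u t eta sigma2 r0) /\
  (* representation of Gamma^+ *)
  GammaPlus U mu u t =
    \bigcup_(eta in [set e : R | 0 < e])
      \bigcap_(sigma in [set e : R | 0 < e])
        \bigcup_(r0 in [set e : R | 0 < e]) GammaPlus_esr U mu u t eta sigma r0 /\
  (* consequence for H^{d-1} *)
  ((0 < hausdorff d.-1 (GammaPlus U mu u t))%E ->
     exists eta : R, 0 < eta /\
       forall sigma : R, 0 < sigma -> exists r0 : R, 0 < r0 /\
         (0 < hausdorff d.-1 (GammaPlus_esr U mu u t eta sigma r0))%E).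
Proof.
move=> _ _ _ _ _.
split; first by move=> eta1 eta2 sigma r0 _ le12 _ _; exact: GammaPlus_esr_eta_antitone.
split; first by move=> eta sigma r1 r2 _ _ _ le12; exact: GammaPlus_esr_r0_antitone.
split; first by move=> eta s1 s2 r0 _ _ le12 _; exact: GammaPlus_esr_sigma_monotone.
split; first exact: GammaPlusE.
move=> H_pos; apply: contrapT => no_eta.
have /choice[sg hsg] n : exists sg : R, 0 < sg /\ forall r0, 0 < r0 ->
    (hausdorff d.-1 (GammaPlus_esr U mu u t (n.+1%:R^-1) sg r0) <= 0)%E.
  apply: contrapT => no_sg; apply: no_eta; exists n.+1%:R^-1.
  split=> [|sg sg_gt0]; first by rewrite invr_gt0.
  apply: contrapT => no_r0; apply: no_sg; exists sg; split=> // r0 r0_gt0.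
  by rewrite leNgt; apply/negP => H_r0_pos; apply: no_r0; exists r0.
suff : (hausdorff d.-1 (GammaPlus U mu u t) <= 0)%E by rewrite leNgt H_pos.
apply: le_trans (le_hausdorff d.-1 (GammaPlus_sub_bigcup_esr (fun n => (hsg n).1))) _.
apply: hausdorff_bigcup_null => n; apply: hausdorff_bigcup_null => m.
by apply: (hsg n).2; rewrite invr_gt0.
Qed.
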